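(* Let $X$ be a Borel space, $\mu$ a Borel probability measure on $X$, $L_\iota\ge0$, and $\iota:X\times\mathbb{R}^l\to\mathbb{R}$ an $L_\iota$-LG integrand, with induced integral functional $I_\iota:L^2(\mu,\mathbb{R}^l)\to\mathbb{R}$. Then for all $f\in L^2(\mu,\mathbb{R}^l)$, $\nabla I_\iota(f)(x)=\nabla_z\iota(x,f(x))$ for $\mu$-a.e. $x$, and $I_\iota$ is $L_\iota$-LG (on $L^2(\mu,\mathbb{R}^l)$). If moreover $\iota$ is also a $\lambda_\iota$-PL integrand for some $\lambda_\iota>0$, then $I_\iota$ is $\lambda_\iota$-PL (on $L^2(\mu,\mathbb{R}^l)$).
   Context: $L^2(\mu,\mathbb{R}^l)$ is the Hilbert space of $\mu$-equivalence classes of square-integrable $\mathbb{R}^l$-valued functions. An integrand is a function $\iota:X\times\mathbb{R}^l\to\mathbb{R}$ that is finite, measurable in $x$ and differentiable in $z$; its integral functional is $I_\iota(f)=\int\iota(x,f(x))\,d\mu(x)$, assumed to be a well-defined real number for every $f\in L^2(\mu,\mathbb{R}^l)$. A function $g$ on a Hilbert space $H$ is $L$-LG on a set $E$ if it is Fréchet differentiable there and $\|\nabla g(u)-\nabla g(v)\|\le L\|u-v\|$ for $u,v\in E$; if $g$ is bounded below with $g_*=\inf_Hg\in\mathbb{R}$, it is $\lambda$-PL on $E$ ($\lambda>0$) if $\tfrac12\|\nabla g(u)\|^2\ge\lambda(g(u)-g_* )$ for $u\in E$. $\iota$ is an $L$-LG integrand if $\iota(x,\cdot)$ is $L$-LG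 on $\mathbb{R}^l$ for $\mu$-a.e. $x$, and a $\lambda$-PL integrand if $\iota(x,\cdot)$ is $\lambda$-PL on $\mathbb{R}^l$ for $\mu$-a.e. $x$. *)

From HB Require Import structures.
From mathcomp Require Import all_boot all_order all_algebra.
From mathcomp Require Import all_classical all_reals all_analysis.
Set Implicit Arguments. Unset Strict Implicit. Unset Printing Implicit Defensive.
Import Order.TTheory GRing.Theory Num.Theory.
Import numFieldNormedType.Exports.
Local Open Scope classical_set_scope.
Local Open Scope ring_scope.

Section Defs.
Context {R : realType}.

Definition dotRl (l : nat) (u v : 'rV[R]_l) : R := \sum_(i < l) u 0 i * v 0 i.
Definition normRl (l : nat) (u : 'rV[R]_l) : R := Num.sqrt (dotRl u u).

Definition has_grad_Rl (l : nat) (g : 'rV[R]_l -> R) (z v : 'rV[R]_l) : Prop :=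
  forall e : R, 0 < e -> exists2 d : R, 0 < d &
    forall h : 'rV[R]_l, normRl h < d ->
      `| g (z + h) - g z - dotRl v h | <= e * normRl h.

Definition LG_Rl (l : nat) (L : R) (g : 'rV[R]_l -> R) : Prop :=
  (forall u, exists v, has_grad_Rl g u v) /\
  (forall u w gu gw, has_grad_Rl g u gu -> has_grad_Rl g w gw ->
     normRl (gu - gw) <= L * normRl (u - w)).

Definition PL_Rl (l : nat) (lam : R) (g : 'rV[R]_l -> R) : Prop :=
  has_lbound (range g) /\
  (forall u, exists v, has_grad_Rl g u v) /\
  (forall u gu, has_grad_Rl g u gu ->
     lam * (g u - inf (range g)) <= 2^-1 * normRl gu ^+ 2).

Context {d : measure_display} {X : measurableType d}.
Variable mu : {measure set X -> \bar R}.

(** f is (a representative of an element of) L^2(mu, R^l):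
    measurable (componentwise, i.e. Borel measurable into R^l) and
    square-integrable. *)
Definition L2 (l : nat) (f : X -> 'rV[R]_l) : Prop :=
  (forall i : 'I_l, measurable_fun [set: X] (fun x => f x 0 i)) /\
  mu.-integrable [set: X] (fun x => (dotRl (f x) (f x))%:E).

Definition ipL2 (l : nat) (f g : X -> 'rV[R]_l) : R :=
  Rintegral mu [set: X] (fun x => dotRl (f x) (g x)).
Definition normL2 (l : nat) (f : X -> 'rV[R]_l) : R := Num.sqrt (ipL2 f f).

Definition has_grad_L2 (l : nat) (J : (X -> 'rV[R]_l) -> R)
    (f G : X -> 'rV[R]_l) : Prop :=
  forall e : R, 0 < e -> exists2 dl : R, 0 < dl &
    forall h : X -> 'rV[R]_l, L2 h -> normL2 h < dl ->
      `| J (fun x => f x + h x) - J f - ipL2 G h | <= e * normL2 h.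

Definition LG_L2 (l : nat) (L : R) (J : (X -> 'rV[R]_l) -> R) : Prop :=
  (forall f, L2 f -> exists G, L2 G /\ has_grad_L2 J f G) /\
  (forall f g Gf Gg, L2 f -> L2 g -> L2 Gf -> L2 Gg ->
     has_grad_L2 J f Gf -> has_grad_L2 J g Gg ->
     normL2 (fun x => Gf x - Gg x) <= L * normL2 (fun x => f x - g x)).

Definition PL_L2 (l : nat) (lam : R) (J : (X -> 'rV[R]_l) -> R) : Prop :=
  has_lbound (J @` (@L2 l)) /\
  (forall f, L2 f -> exists G, L2 G /\ has_grad_L2 J f G) /\
  (forall f G, L2 f -> L2 G -> has_grad_L2 J f G ->
     lam * (J f - inf (J @` (@L2 l))) <= 2^-1 * normL2 G ^+ 2).

Definition Ifun (l : nat) (iota : X -> 'rV[R]_l -> R) (f : X -> 'rV[R]_l) : R :=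
  Rintegral mu [set: X] (fun x => iota x (f x)).

Definition integrand (l : nat) (iota : X -> 'rV[R]_l -> R) : Prop :=
  (forall z, measurable_fun [set: X] (fun x => iota x z)) /\
  (forall x z, exists v, has_grad_Rl (iota x) z v) /\
  (forall f, L2 f -> mu.-integrable [set: X] (fun x => (iota x (f x))%:E)).

End Defs.

From HB Require Import structures.
From mathcomp Require Import all_boot all_order all_algebra.
From mathcomp Require Import all_classical all_reals all_analysis.
From mathcomp Require Import ring lra measurable_realfun.
Import Order.TTheory GRing.Theory Num.Theory.
Import numFieldNormedType.Exports.
Set Implicit Arguments. Unset Strict Implicit. Unset Printing Implicit Defensive.
Local Open Scope classical_set_scope.
Local Open Scope ring_scope.

(* For a.e. x, the L-LG property of iota x gives, by the mean value theorem,
   the quadratic bound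
     |iota x (z + h) - iota x z - <grad iota x z, h>| <= L |h|^2,
   and integrating it gives the Frechet expansion of I_iota at f with gradient
   G x = grad iota x (f x), as soon as G is square integrable.  The same bound
   shows that <G, h> is integrable for every h in L^2, which forces G into L^2
   by Landau's resonance theorem.  Since L^2 gradients are unique a.e., the LG
   and PL inequalities of I_iota are the integrals of the pointwise ones. *)

Section Euclidean.
Context {R : realType} {l : nat}.
Implicit Types (t : R) (u v w : 'rV[R]_l).

Lemma dotRlC u v : dotRl u v = dotRl v u.
Proof. by apply: eq_bigr => i _; rewrite mulrC. Qed.

Lemma dotRlDl u v w : dotRl (u + v) w = dotRl u w + dotRl v w.
Proof. by rewrite /dotRl -big_split; apply: eq_bigr => i _; rewrite mxE mulrDl. Qed.

Lemma dotRlDr u v w : dotRl u (v + w) = dotRl u v + dotRl u w.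
Proof. by rewrite dotRlC dotRlDl !(dotRlC u). Qed.

Lemma dotRlZl t u v : dotRl (t *: u) v = t * dotRl u v.
Proof. by rewrite /dotRl mulr_sumr; apply: eq_bigr => i _; rewrite mxE mulrA. Qed.

Lemma dotRlZr t u v : dotRl u (t *: v) = t * dotRl u v.
Proof. by rewrite dotRlC dotRlZl dotRlC. Qed.

Lemma dotRlBl u v w : dotRl (u - v) w = dotRl u w - dotRl v w.
Proof. by rewrite dotRlDl -scaleN1r dotRlZl mulN1r. Qed.

Lemma dotRlBr u v w : dotRl u (v - w) = dotRl u v - dotRl u w.
Proof. by rewrite dotRlC dotRlBl !(dotRlC u). Qed.

Lemma dotRl0r u : dotRl u 0 = 0.
Proof. by rewrite /dotRl big1 // => i _; rewrite mxE mulr0. Qed.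

Lemma dotRl_ge0 u : 0 <= dotRl u u.
Proof. by apply: sumr_ge0 => i _; rewrite -expr2 sqr_ge0. Qed.

Lemma dotRl_eq0 u : (dotRl u u == 0) = (u == 0).
Proof.
apply/idP/eqP => [|->]; last by rewrite dotRl0r.
rewrite /dotRl psumr_eq0 => [/allP u0|i _]; last by rewrite -expr2 sqr_ge0.
apply/rowP => i; have := u0 i (mem_index_enum i).
by rewrite /= -expr2 sqrf_eq0 mxE => /eqP.
Qed.

Lemma dotRl_delta u (i : 'I_l) : dotRl u (delta_mx 0 i) = u 0 i.
Proof.
rewrite /dotRl (bigD1 i) //= big1 => [|j /negbTE ji]; last by rewrite mxE ji andbF mulr0.
by rewrite mxE !eqxx mulr1 addr0.
Qed.

Lemma normRl_ge0 u : 0 <= normRl u.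
Proof. exact: sqrtr_ge0. Qed.

Lemma normRl_sqr u : normRl u ^+ 2 = dotRl u u.
Proof. by rewrite sqr_sqrtr // dotRl_ge0. Qed.

Lemma normRlZ t u : normRl (t *: u) = `|t| * normRl u.
Proof.
by rewrite /normRl dotRlZl dotRlZr mulrA -expr2 sqrtrM ?sqr_ge0 // sqrtr_sqr.
Qed.

Lemma dotRl_sqr_le u v : dotRl u v ^+ 2 <= dotRl u u * dotRl v v.
Proof.
have [/eqP|v0] := eqVneq (dotRl v v) 0.
  by rewrite dotRl_eq0 => /eqP ->; rewrite !dotRl0r expr0n mulr0.
have vv_gt0 : 0 < dotRl v v by rewrite lt_def v0 dotRl_ge0.
pose t := dotRl u v / dotRl v v.
have tvv : t * dotRl v v = dotRl u v by rewrite mulfVK.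
have := dotRl_ge0 (u - t *: v).
rewrite !(dotRlBl, dotRlBr, dotRlZl, dotRlZr) (dotRlC v u) tvv subrr mulr0 subr0 => uv.
rewrite -subr_ge0.
have -> : dotRl u u * dotRl v v - dotRl u v ^+ 2 =
    (dotRl u u - t * dotRl u v) * dotRl v v by rewrite /t; field.
by rewrite mulr_ge0 // ltW.
Qed.

Lemma normr_dotRl_le u v : `|dotRl u v| <= normRl u * normRl v.
Proof.
rewrite -sqrtrM ?dotRl_ge0 // -sqrtr_sqr.
by rewrite ler_sqrt ?dotRl_sqr_le // mulr_ge0 ?dotRl_ge0.
Qed.

Lemma normr_dotRl_le_add u v : `|dotRl u v| <= dotRl u u + dotRl v v.
Proof.
apply: le_trans (normr_dotRl_le u v) _; rewrite -!normRl_sqr.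
have := sqr_ge0 (normRl u - normRl v).
by have := normRl_ge0 u; have := normRl_ge0 v; nra.
Qed.

Lemma dotRlDD_le u v : dotRl (u + v) (u + v) <= 2 * dotRl u u + 2 * dotRl v v.
Proof.
have := dotRl_ge0 (u - v).
rewrite !dotRlBl !dotRlBr !dotRlDl !dotRlDr (dotRlC v u); lra.
Qed.

End Euclidean.

Section Descent.
Context {R : realType} {l : nat}.
Implicit Types (g : 'rV[R]_l -> R) (z h v : 'rV[R]_l).

Lemma has_grad_Rl_line g z v h : has_grad_Rl g z v ->
  forall e : R, 0 < e -> exists2 r : R, 0 < r & forall s : R, `|s| < r ->
    `|g (z + s *: h) - g z - s * dotRl v h| <= e * `|s|.
Proof.
move=> gv e e_gt0.
have nh_gt0 : 0 < normRl h + 1 by rewrite ltr_wpDl ?normRl_ge0.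
have [r r_gt0 gvr] := gv _ (divr_gt0 e_gt0 nh_gt0).
exists (r / (normRl h + 1)) => [|s sr]; first by rewrite divr_gt0.
have sh_le : normRl (s *: h) <= `|s| * (normRl h + 1).
  by rewrite normRlZ ler_wpM2l ?lerDl.
have sh_lt : normRl (s *: h) < r by rewrite (le_lt_trans sh_le) // -ltr_pdivlMr.
rewrite -dotRlZr; apply: le_trans (gvr _ sh_lt) _.
have -> : e * `|s| = e / (normRl h + 1) * (`|s| * (normRl h + 1)).
  by field; rewrite gt_eqF.
by rewrite ler_wpM2l // ltW // divr_gt0.
Qed.

Lemma has_grad_Rl_is_derive g z h v (t : R) : has_grad_Rl g (z + t *: h) v ->
  is_derive t 1 (fun s : R => g (z + s *: h)) (dotRl v h).
Proof.
move=> gv.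
have quotient : (fun s : R => s^-1 *: (((fun s : R => g (z + s *: h)) \o shift t)
    (s *: 1) - g (z + t *: h))) @ 0^' --> dotRl v h.
  apply/cvgrPdist_le => e e_gt0.
  have [r r_gt0 gvr] := has_grad_Rl_line h gv e_gt0.
  near=> s.
  have s_neq0 : s != 0 by near: s; exact: nbhs_dnbhs_neq.
  have sr : `|s| < r by near: s; exact: dnbhs0_lt.
  rewrite /= /shift /= [_%:A]mulr1 scalerDl addrA addrAC.
  set D := g _ - g _.
  have -> : dotRl v h - s^-1 *: D = - s^-1 * (D - s * dotRl v h).
    by rewrite /GRing.scale /=; field.
  rewrite normrM normrN normfV ler_pdivrMl ?normr_gt0 // [_ * e]mulrC.
  exact: gvr.
apply: DeriveDef; first by apply/cvg_ex; exists (dotRl v h).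
exact/cvg_lim.
Unshelve. all: by end_near. Qed.

Lemma has_grad_Rl_subr_dotRl g a z v : has_grad_Rl g z v ->
  has_grad_Rl (fun u => g u - dotRl a u) z (v - a).
Proof.
move=> gv e e_gt0; have [r r_gt0 gvr] := gv e e_gt0; exists r => // h hr.
have := gvr h hr; congr (_ <= _); congr `|_|.
by rewrite dotRlDr dotRlBl; ring.
Qed.

(* Mean value theorem on s |-> g (z + s h) - <v, z + s h>, whose derivative at
   c is <grad g (z + c h) - grad g z, h>. *)
Lemma LG_Rl_descent g (L : R) z h v : 0 <= L -> LG_Rl L g -> has_grad_Rl g z v ->
  `|g (z + h) - g z - dotRl v h| <= L * normRl h ^+ 2.
Proof.
move=> L_ge0 [gex glip] gz.
pose G u := projT1 (cid (gex u)).
have GP u : has_grad_Rl g u (G u) by rewrite /G; case: cid.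
pose gv := fun u => g u - dotRl v u.
pose phi := fun s : R => gv (z + s *: h).
have phi' (s : R) : is_derive s 1 phi (dotRl (G (z + s *: h) - v) h).
  exact/has_grad_Rl_is_derive/has_grad_Rl_subr_dotRl.
have [c c01 phi_mvt] := MVT ltr01 (fun s _ => phi' s)
  (derivable_within_continuous (fun s _ => @ex_derive _ _ _ _ _ _ _ (phi' s))).
have -> : g (z + h) - g z - dotRl v h = phi 1 - phi 0.
  by rewrite /phi /gv scale1r scale0r addr0 dotRlDr; ring.
rewrite phi_mvt subr0 mulr1; apply: le_trans (normr_dotRl_le _ _) _.
have /andP[c_ge0 c_le1] : 0 <= c <= 1.
  by move: c01; rewrite in_itv => /andP[/ltW -> /ltW ->].
have := glip _ _ _ _ (GP (z + c *: h)) gz.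
rewrite addrAC subrr add0r normRlZ ger0_norm // => lip.
rewrite expr2 mulrA ler_wpM2r ?normRl_ge0 //; apply: le_trans lip _.
by rewrite ler_wpM2l // ler_piMl ?normRl_ge0.
Qed.

End Descent.

Section L2Space.
Context {R : realType} {d : measure_display} {X : measurableType d} {l : nat}.
Implicit Types f g h : X -> 'rV[R]_l.

Definition measurable_rV f := forall i : 'I_l, measurable_fun [set: X] (fun x => f x 0 i).

Lemma measurable_rVD f g : measurable_rV f -> measurable_rV g ->
  measurable_rV (fun x => f x + g x).
Proof.
move=> mf mg i; rewrite (_ : (fun x => _) = (fun x => f x 0 i + g x 0 i)).
  exact: measurable_funD.
by apply/funext => x; rewrite mxE.
Qed.

Lemma measurable_rV_scale (w : X -> R) f : measurable_fun [set: X] w ->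
  measurable_rV f -> measurable_rV (fun x => w x *: f x).
Proof.
move=> mw mf i; rewrite (_ : (fun x => _) = (fun x => w x * f x 0 i)).
  exact: measurable_funM.
by apply/funext => x; rewrite mxE.
Qed.

Lemma measurable_fun_dotRl f g : measurable_rV f -> measurable_rV g ->
  measurable_fun [set: X] (fun x => dotRl (f x) (g x)).
Proof. by move=> mf mg; apply: measurable_sum => i; exact: measurable_funM. Qed.

Variable mu : {measure set X -> \bar R}.

Lemma integrable_normr_le (F G : X -> R) : measurable_fun [set: X] F ->
  (forall x, `|F x| <= G x) -> mu.-integrable [set: X] (fun x => (G x)%:E) ->
  mu.-integrable [set: X] (fun x => (F x)%:E).
Proof.
move=> mF FG iG; apply: (le_integrable measurableT _ _ iG); first exact/measurable_EFinP.
by move=> x _ /=; rewrite lee_fin (le_trans (FG x)) ?ler_norm.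
Qed.

Lemma integrable_dotRl f g : L2 mu f -> L2 mu g ->
  mu.-integrable [set: X] (fun x => (dotRl (f x) (g x))%:E).
Proof.
move=> [mf if_] [mg ig].
apply: integrable_normr_le (measurable_fun_dotRl mf mg) _ _ => [x|].
  exact: normr_dotRl_le_add.
exact: (integrableD measurableT if_ ig).
Qed.

Lemma L2D f g : L2 mu f -> L2 mu g -> L2 mu (fun x => f x + g x).
Proof.
move=> [mf if_] [mg ig]; have mfg := measurable_rVD mf mg; split => //.
apply: (integrable_normr_le
  (G := fun x => 2 * dotRl (f x) (f x) + 2 * dotRl (g x) (g x))
  (measurable_fun_dotRl mfg mfg)) => [x|].
  by rewrite ger0_norm ?dotRl_ge0 ?dotRlDD_le.
exact: (integrableD measurableT (integrableZl measurableT 2 if_)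
                                (integrableZl measurableT 2 ig)).
Qed.

Lemma L2_scale (w : X -> R) f : measurable_fun [set: X] w -> measurable_rV f ->
  mu.-integrable [set: X] (fun x => (w x ^+ 2 * dotRl (f x) (f x))%:E) ->
  L2 mu (fun x => w x *: f x).
Proof.
move=> mw mf w2f; split; first exact: measurable_rV_scale.
apply: eq_integrable measurableT _ _ _ w2f => x _.
by rewrite dotRlZl dotRlZr mulrA -expr2.
Qed.

Lemma L2Z (c : R) f : L2 mu f -> L2 mu (fun x => c *: f x).
Proof.
move=> [mf if_]; apply: L2_scale (measurable_cst c) mf _.
exact: (integrableZl measurableT (c ^+ 2) if_).
Qed.

Lemma L2B f g : L2 mu f -> L2 mu g -> L2 mu (fun x => f x - g x).
Proof.
move=> fL2 gL2; have := L2D fL2 (L2Z (-1) gL2).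
by congr (L2 mu _); apply/funext => x; rewrite scaleN1r.
Qed.

Lemma ipL2Bl f g h : L2 mu f -> L2 mu g -> L2 mu h ->
  ipL2 mu (fun x => f x - g x) h = ipL2 mu f h - ipL2 mu g h.
Proof.
move=> fL2 gL2 hL2; rewrite /ipL2 -RintegralB //; try exact: integrable_dotRl.
by apply: eq_Rintegral => x _; rewrite dotRlBl.
Qed.

Lemma ipL2Zl (c : R) f g : L2 mu f -> L2 mu g ->
  ipL2 mu (fun x => c *: f x) g = c * ipL2 mu f g.
Proof.
move=> fL2 gL2; rewrite /ipL2 -RintegralZl //; last exact: integrable_dotRl.
by apply: eq_Rintegral => x _; rewrite dotRlZl.
Qed.

Lemma ipL2Zr (c : R) f g : L2 mu f -> L2 mu g ->
  ipL2 mu f (fun x => c *: g x) = c * ipL2 mu f g.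
Proof.
move=> fL2 gL2; rewrite /ipL2 -RintegralZl //; last exact: integrable_dotRl.
by apply: eq_Rintegral => x _; rewrite dotRlZr.
Qed.

Lemma ipL2_ge0 f : 0 <= ipL2 mu f f.
Proof. by apply: Rintegral_ge0 => x _; exact: dotRl_ge0. Qed.

Lemma normL2_ge0 f : 0 <= normL2 mu f.
Proof. exact: sqrtr_ge0. Qed.

Lemma normL2_sqr f : normL2 mu f ^+ 2 = ipL2 mu f f.
Proof. by rewrite sqr_sqrtr // ipL2_ge0. Qed.

Lemma normL2Z (c : R) f : L2 mu f ->
  normL2 mu (fun x => c *: f x) = `|c| * normL2 mu f.
Proof.
move=> fL2; rewrite /normL2 ipL2Zl ?ipL2Zr //; last exact: L2Z.
by rewrite mulrA -expr2 sqrtrM ?sqr_ge0 // sqrtr_sqr.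
Qed.

Lemma ipL2_eq0_ae f : L2 mu f -> ipL2 mu f f = 0 -> {ae mu, forall x, f x = 0}.
Proof.
move=> [mf if_] ff0.
have mff : measurable_fun [set: X] (fun x => (dotRl (f x) (f x))%:E).
  exact/measurable_EFinP/measurable_fun_dotRl.
have : (\int[mu]_x `|(dotRl (f x) (f x))%:E| = 0)%E.
  transitivity (\int[mu]_x (dotRl (f x) (f x))%:E)%E.
    by apply: eq_integral => x _; rewrite gee0_abs // lee_fin dotRl_ge0.
  by rewrite -(fineK (integrable_fin_num measurableT if_)); move: ff0; rewrite /ipL2 /Rintegral => ->.
move/(ae_eq_integral_abs mu measurableT mff).
by apply: filterS => x /(_ I) [/eqP]; rewrite dotRl_eq0 => /eqP.
Qed.

Lemma ae_le_Rintegral (F1 F2 : X -> R) :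
  mu.-integrable [set: X] (EFin \o F1) -> mu.-integrable [set: X] (EFin \o F2) ->
  {ae mu, forall x, F1 x <= F2 x} ->
  Rintegral mu [set: X] F1 <= Rintegral mu [set: X] F2.
Proof.
move=> iF1 iF2 F12; rewrite -subr_ge0 -RintegralB //.
have /integrableP[/measurable_EFinP mF1 _] := iF1.
have /integrableP[/measurable_EFinP mF2 _] := iF2.
rewrite /Rintegral (ae_eq_integral (fun x => (Num.max (F2 x - F1 x) 0)%:E) _
  measurableT).
- by apply/fine_ge0/integral_ge0 => x _; rewrite lee_fin le_max lexx orbT.
- exact/measurable_EFinP/measurable_funB.
- by apply/measurable_EFinP/measurable_maxr => //; exact/measurable_funB.
by apply: filterS F12 => x F12x _; rewrite max_l // subr_ge0.
Qed.

End L2Space.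

Lemma L2_cst {R : realType} {d : measure_display} {X : measurableType d} {l : nat}
  (mu : {finite_measure set X -> \bar R}) (v : 'rV[R]_l) : L2 mu (fun=> v).
Proof.
split => [i|]; first exact: measurable_cst.
exact: (finite_measure_integrable_cst mu (dotRl v v) measurableT).
Qed.

Section AbelDini.
Context {R : realType}.

Lemma nneseries_le (u : nat -> R) (K : R) : (forall j, 0 <= u j) ->
  (forall n, \sum_(0 <= j < n) u j <= K) -> (\sum_(j <oo) (u j)%:E <= K%:E)%E.
Proof.
move=> u_ge0 uK; apply: lime_le.
  by apply: is_cvg_nneseries => n _ _; rewrite lee_fin.
by apply: nearW => n; rewrite sumEFin lee_fin.
Qed.

Variable m : nat -> R.
Hypothesis m_ge0 : forall j, 0 <= m j.

Definition abel_dini_weight j := (1 + series m j.+1)^-1.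

Let series_ge0 n : 0 <= series m n.
Proof. by apply: sumr_ge0 => i _. Qed.

Let series_le a b : (a <= b)%N -> series m a <= series m b.
Proof. by move=> ab; rewrite -subr_ge0 sub_series_geq //; apply: sumr_ge0. Qed.

Lemma abel_dini_weight_ge0 j : 0 <= abel_dini_weight j.
Proof. by rewrite invr_ge0 addr_ge0. Qed.

Let abel_dini_block a b : (a <= b)%N ->
  (series m b - series m a) / (1 + series m b)
  <= \sum_(a <= i < b) abel_dini_weight i * m i.
Proof.
move=> ab; rewrite sub_series_geq // mulr_suml; apply: ler_sum_nat => i /andP[_ ib].
rewrite [leRHS]mulrC ler_wpM2l // lef_pV2 ?posrE ?ltr_wpDr //.
by rewrite lerD2l series_le.
Qed.

Let abel_dini_weight_sqr j : abel_dini_weight j ^+ 2 * m j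
  <= (1 + series m j)^-1 - (1 + series m j.+1)^-1.
Proof.
rewrite /abel_dini_weight seriesSr.
have Mj_gt0 : 0 < 1 + series m j by rewrite ltr_wpDr.
have Mj1_gt0 : 0 < 1 + (series m j + m j) by rewrite ltr_wpDr // addr_ge0.
have -> : (1 + series m j)^-1 - (1 + (series m j + m j))^-1
    = m j / ((1 + series m j) * (1 + (series m j + m j))).
  by field; rewrite !gt_eqF.
rewrite exprVn mulrC ler_wpM2l // lef_pV2 ?posrE ?exprn_gt0 ?mulr_gt0 //.
by rewrite expr2 ler_pM2r // lerD2l lerDl.
Qed.

Lemma abel_dini_weight_sqr_le1 :
  (\sum_(j <oo) (abel_dini_weight j ^+ 2 * m j)%:E <= 1%:E)%E.
Proof.
apply: nneseries_le => [j|n]; first by rewrite mulr_ge0 ?sqr_ge0.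
apply: le_trans (ler_sum_nat (fun j _ => abel_dini_weight_sqr j)) _.
rewrite (telescope_sumr_eq (fun k => - (1 + series m k)^-1)) // => [|k _].
  have -> : series m 0 = 0 by rewrite /series /= big_geq.
  have : 0 <= (1 + series m n)^-1 by rewrite invr_ge0 addr_ge0.
  by rewrite addr0 invr1; lra.
by rewrite opprK addrC.
Qed.

Lemma abel_dini_weight_pinfty : (\sum_(j <oo) (m j)%:E = +oo)%E ->
  (\sum_(j <oo) (abel_dini_weight j * m j)%:E = +oo)%E.
Proof.
move=> m_oo.
have unbounded (K : R) : exists n, K <= series m n.
  apply: contrapT => /forallNP noK.
  have : (\sum_(j <oo) (m j)%:E <= K%:E)%E.
    by apply: nneseries_le => // n; rewrite leNgt; apply/negP => /ltW /noK.
  by rewrite m_oo leye_eq.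
(* each block on which series m grows from M to at least 1 + 2 M contributes 1/2 *)
have halves k : exists n, k%:R <= 2 * \sum_(0 <= i < n) abel_dini_weight i * m i.
  elim: k => [|k [n IH]]; first by exists 0%N; rewrite big_geq // mulr0.
  have [b Mb] := unbounded (1 + 2 * series m n).
  have nb : (n <= b)%N.
    rewrite leqNgt; apply/negP => /ltnW /series_le bn.
    by have := series_ge0 n; lra.
  exists b; rewrite (big_cat_nat (leq0n n) nb) /= mulrDr -natr1 lerD //.
  apply: le_trans (ler_wpM2l _ (abel_dini_block nb)) => //.
  by rewrite mulrA ler_pdivlMr ?ltr_wpDr //; lra.
apply/eqyP => A A_gt0.
have [n An] := halves (Num.truncn (2 * A)).+1.
apply: le_trans (nneseries_lim_ge n _) => [|j _ _]; last first.
  by rewrite lee_fin mulr_ge0 ?abel_dini_weight_ge0.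
rewrite sumEFin lee_fin; have := truncnS_gt (2 * A); lra.
Qed.

End AbelDini.

Section Resonance.
Context {R : realType} {d : measure_display} {X : measurableType d}.
Variable mu : {finite_measure set X -> \bar R}.
Variable phi : X -> R.
Hypothesis mphi : measurable_fun [set: X] phi.
Hypothesis phi_ge0 : forall x, 0 <= phi x.

Let layer j := [set x | Num.truncn (phi x) = j].

Let measurable_layer j : measurable (layer j).
Proof.
have -> : layer j = [set: X] `&` phi @^-1` `[j%:R, j.+1%:R[.
  apply/seteqP; split => x /=.
    by move=> xj; split => //; rewrite in_itv /= -truncn_eq ?phi_ge0 // xj.
  by move=> [_]; rewrite in_itv /= -truncn_eq ?phi_ge0 // => /eqP.
exact: mphi.
Qed.

Let measurable_fun_layerwise (a : nat -> R) :
  measurable_fun [set: X] (fun x => a (Num.truncn (phi x))).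
Proof.
move=> _ Y mY.
have -> : [set: X] `&` (fun x => a (Num.truncn (phi x))) @^-1` Y =
    \bigcup_(j in [set j | Y (a j)]) layer j.
  apply/seteqP; split => x /=; first by move=> [_ Yx]; exists (Num.truncn (phi x)).
  by move=> [j /= Yj ->].
exact: bigcup_measurable.
Qed.

Let layer_integral_fin_num j : (\int[mu]_(x in layer j) (phi x)%:E)%E \is a fin_num.
Proof.
rewrite ge0_fin_numE; last by apply: integral_ge0 => x _; rewrite lee_fin.
apply: (@le_lt_trans _ _ (\int[mu]_(x in layer j) (cst j.+1%:R%:E x))%E).
  apply: ge0_le_integral => //.
  - by move=> x _; rewrite lee_fin.
  - exact/measurable_EFinP/(measurable_funS _ _ mphi).
  - by move=> x /= xj; rewrite lee_fin -xj ltW // truncnS_gt.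
rewrite integral_cst //.
have := fin_num_measure mu (layer j) (measurable_layer j).
by rewrite -ge0_fin_numE ?mule_ge0 // => mfin; rewrite fin_numM.
Qed.

Let layer_mass j := fine (\int[mu]_(x in layer j) (phi x)%:E)%E.

Let layer_mass_ge0 j : 0 <= layer_mass j.
Proof. by apply/fine_ge0/integral_ge0 => x _; rewrite lee_fin. Qed.

Let integral_layerwise (a : nat -> R) : (forall j, 0 <= a j) ->
  (\int[mu]_x (a (Num.truncn (phi x)) * phi x)%:E =
   \sum_(j <oo) (a j * layer_mass j)%:E)%E.
Proof.
move=> a_ge0.
have cover : \bigcup_j layer j = [set: X].
  by apply/seteqP; split => x // _; exists (Num.truncn (phi x)).
have := @ge0_integral_bigcup _ _ _ mu layer
  (fun x => (a (Num.truncn (phi x)) * phi x)%:E) measurable_layer.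
rewrite cover => ->; first last.
- by move=> i j _ _ [x [/= <- <-]].
- by move=> x _; rewrite lee_fin mulr_ge0.
- exact/measurable_EFinP/measurable_funM/mphi/measurable_fun_layerwise.
apply: eq_eseriesr => j _.
rewrite EFinM /layer_mass fineK // -ge0_integralZl //; last 3 first.
- exact/measurable_EFinP/(measurable_funS _ _ mphi).
- by move=> x _; rewrite lee_fin.
- by rewrite lee_fin.
by apply: eq_integral => x /[1!inE] /= ->; rewrite EFinM.
Qed.

(* If phi were not integrable, its
   masses on the layers {truncn phi = j} would have a divergent sum, and their
   Abel-Dini weights give a w with w^2 phi integrable but not w phi. *)
Lemma landau_resonance :
  (forall w : X -> R, measurable_fun [set: X] w -> (forall x, 0 <= w x) ->
     mu.-integrable [set: X] (fun x => (w x ^+ 2 * phi x)%:E) ->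
     (\int[mu]_x (w x * phi x)%:E < +oo)%E) ->
  mu.-integrable [set: X] (fun x => (phi x)%:E).
Proof.
move=> resonant; apply/integrableP; split; first exact/measurable_EFinP.
have integral_phi : (\int[mu]_x `|(phi x)%:E| = \sum_(j <oo) (layer_mass j)%:E)%E.
  transitivity (\int[mu]_x ((fun=> 1) (Num.truncn (phi x)) * phi x)%:E)%E.
    by apply: eq_integral => x _; rewrite mul1r gee0_abs // lee_fin.
  rewrite (integral_layerwise (a := fun=> 1)) => [|j]; last exact: ler01.
  by apply: eq_eseriesr => j _; rewrite mul1r.
rewrite integral_phi ltey; apply/negP => /eqP mass_oo.
pose c := abel_dini_weight layer_mass.
have c_ge0 := abel_dini_weight_ge0 layer_mass_ge0.
have w2phi : mu.-integrable [set: X]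
    (fun x => (c (Num.truncn (phi x)) ^+ 2 * phi x)%:E).
  apply/integrableP; split.
    exact/measurable_EFinP/measurable_funM/mphi/measurable_funX/measurable_fun_layerwise.
  rewrite (eq_integral (fun x => ((c (Num.truncn (phi x)) ^+ 2) * phi x)%:E)).
    rewrite (integral_layerwise (a := fun j => c j ^+ 2)) => [|j]; last exact: sqr_ge0.
    by apply: le_lt_trans (abel_dini_weight_sqr_le1 layer_mass_ge0) _; rewrite ltry.
  by move=> x _; rewrite gee0_abs // lee_fin mulr_ge0 // sqr_ge0.
have := resonant _ (measurable_fun_layerwise c) (fun x => c_ge0 _) w2phi.
by rewrite integral_layerwise // (abel_dini_weight_pinfty layer_mass_ge0) // ltxx.
Qed.

End Resonance.

Lemma has_grad_L2_unique {R : realType} {d : measure_display} {X : measurableType d}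
    {l : nat} (mu : {measure set X -> \bar R}) (J : (X -> 'rV[R]_l) -> R)
    (f G1 G2 : X -> 'rV[R]_l) :
  L2 mu G1 -> L2 mu G2 -> has_grad_L2 mu J f G1 -> has_grad_L2 mu J f G2 ->
  {ae mu, forall x, G1 x = G2 x}.
Proof.
move=> G1L2 G2L2 dG1 dG2.
have DL2 := L2B G1L2 G2L2; set D := fun x => G1 x - G2 x.
suff D0 : normL2 mu D = 0.
  apply: filterS (ipL2_eq0_ae DL2 _) => [x /eqP|]; first by rewrite subr_eq0 => /eqP.
  by rewrite -normL2_sqr D0 expr0n.
set n := normL2 mu D.
apply/eqP; rewrite eq_le normL2_ge0 andbT leNgt; apply/negP => n_gt0.
(* compare both expansions in the direction t D, of norm m / 2 *)
suff small e : 0 < e -> n <= 2 * e by have := small (n / 4) (divr_gt0 n_gt0 _); lra.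
move=> e_gt0.
have [d1 d1_gt0 dG1e] := dG1 e e_gt0.
have [d2 d2_gt0 dG2e] := dG2 e e_gt0.
set m := Num.min d1 d2.
have m_gt0 : 0 < m by rewrite lt_min d1_gt0.
set t := m / (2 * n).
have t_gt0 : 0 < t by rewrite divr_gt0 // mulr_gt0.
have hL2 := L2Z t DL2.
have nh : normL2 mu (fun x => t *: D x) = m / 2.
  by rewrite normL2Z // gtr0_norm // -/n /t; field; rewrite gt_eqF.
have /andP[h1 h2] :
    (normL2 mu (fun x => t *: D x) < d1) && (normL2 mu (fun x => t *: D x) < d2).
  by rewrite -lt_min nh ltr_pdivrMr // ltr_pMr // ltr1n.
have ip_h : ipL2 mu G1 (fun x => t *: D x) - ipL2 mu G2 (fun x => t *: D x)
    = m * n / 2.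
  by rewrite -ipL2Bl // ipL2Zr // -normL2_sqr -/n /t; field; rewrite gt_eqF.
have : m * n / 2 <= e * (m / 2) + e * (m / 2).
  rewrite -ip_h -nh; set a := J (fun x => f x + t *: D x) - J f.
  have -> : ipL2 mu G1 (fun x => t *: D x) - ipL2 mu G2 (fun x => t *: D x)
      = (a - ipL2 mu G2 (fun x => t *: D x)) - (a - ipL2 mu G1 (fun x => t *: D x)).
    by ring.
  apply: le_trans (ler_norm _) (le_trans (ler_normB _ _) _).
  exact: lerD (dG2e _ hL2 h2) (dG1e _ hL2 h1).
nra.
Qed.

Section IntegralFunctional.
Context {R : realType} {d : measure_display} {X : measurableType d}.
Variable mu : {finite_measure set X -> \bar R}.
Context {l : nat} {L : R} {iota : X -> 'rV[R]_l -> R}.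
Hypothesis L_ge0 : 0 <= L.
Hypothesis iota_integrand : integrand mu iota.
Hypothesis iota_LG : {ae mu, forall x, LG_Rl L (iota x)}.
Implicit Types f g G h : X -> 'rV[R]_l.

Let integrable_iota f : L2 mu f ->
  mu.-integrable [set: X] (fun x => (iota x (f x))%:E).
Proof. by case: iota_integrand => _ [_]; apply. Qed.

Let measurable_iota f : L2 mu f -> measurable_fun [set: X] (fun x => iota x (f x)).
Proof. by move/integrable_iota/integrableP => [/measurable_EFinP]. Qed.

Lemma measurable_rV_integrand_grad f G : L2 mu f ->
  (forall x, has_grad_Rl (iota x) (f x) (G x)) -> measurable_rV G.
Proof.
move=> fL2 fG i.
pose q n x := n.+1%:R * (iota x (f x + n.+1%:R^-1 *: delta_mx 0 i) - iota x (f x)).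
apply: (measurable_fun_cvg (h := q)) => [n|x _].
  apply: measurable_funM => //; apply: measurable_funB; last exact: measurable_iota.
  exact/measurable_iota/L2D/L2_cst.
apply/cvgrPdist_le => e e_gt0.
have [r r_gt0 fGr] := has_grad_Rl_line (delta_mx 0 i) (fG x) e_gt0.
near=> n.
have n_gt0 : 0 < n.+1%:R :> R by [].
have n_lt : `|n.+1%:R^-1| < r :> R.
  by rewrite gtr0_norm ?invr_gt0 //; near: n; exact: (near_infty_natSinv_lt (PosNum r_gt0)).
have := fGr _ n_lt; rewrite dotRl_delta [`|n.+1%:R^-1|]gtr0_norm ?invr_gt0 // => fGn.
have -> : G x 0 i - q n x = - n.+1%:R * (iota x (f x + n.+1%:R^-1 *: delta_mx 0 i)
    - iota x (f x) - n.+1%:R^-1 * G x 0 i).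
  by rewrite /q; field.
by rewrite normrM normrN normr_nat -ler_pdivlMl // [_^-1 * e]mulrC.
Unshelve. all: by end_near. Qed.

Let iota_descent : {ae mu, forall x (z w v : 'rV[R]_l), has_grad_Rl (iota x) z v ->
  `|iota x (z + w) - iota x z - dotRl v w| <= L * dotRl w w}.
Proof.
apply: filterS iota_LG => x xLG z w v zv.
by rewrite -normRl_sqr; exact: LG_Rl_descent.
Qed.

Lemma L2_integrand_grad f G : L2 mu f ->
  (forall x, has_grad_Rl (iota x) (f x) (G x)) -> L2 mu G.
Proof.
move=> fL2 fG; have mG := measurable_rV_integrand_grad fL2 fG.
split => //; apply: landau_resonance => [|x|w mw w_ge0 w2G].
- exact: measurable_fun_dotRl.
- exact: dotRl_ge0.
pose h x := w x *: G x.
have hL2 : L2 mu h := L2_scale mw mG w2G.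
pose S x := `|iota x (f x + h x)| + `|iota x (f x)| + L * dotRl (h x) (h x).
have S_int : mu.-integrable [set: X] (fun x => (S x)%:E).
  have [_ ihh] := hL2.
  exact: (integrableD measurableT (integrableD measurableT
    (integrable_abse (integrable_iota (L2D fL2 hL2)))
    (integrable_abse (integrable_iota fL2))) (integrableZl measurableT L ihh)).
apply: (le_lt_trans _ (integrable_lty measurableT S_int)).
apply: ae_ge0_le_integral => //.
- by move=> x _; rewrite lee_fin mulr_ge0 ?dotRl_ge0.
- exact/measurable_EFinP/measurable_funM/measurable_fun_dotRl.
- by move=> x _; rewrite lee_fin !addr_ge0 ?mulr_ge0 ?dotRl_ge0.
- by case/integrableP: S_int.
(* w |G|^2 = <G, h> <= |iota (f + h)| + |iota f| + L |h|^2 by the descent bound *)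
apply: filterS iota_descent => x descent _.
have := descent _ (h x) _ (fG x); rewrite lee_fin /S /h -/(h x) dotRlZr.
set a := iota x _; set b := iota x _; set B := _ * _ => ab.
have := ler_norm a; have := ler_norm (- b); rewrite normrN.
by have := lerNnormlW ab; lra.
Qed.

Lemma has_grad_L2_Ifun f G : L2 mu f ->
  (forall x, has_grad_Rl (iota x) (f x) (G x)) -> has_grad_L2 mu (Ifun mu iota) f G.
Proof.
move=> fL2 fG e e_gt0; have GL2 := L2_integrand_grad fL2 fG.
have L1_gt0 : 0 < L + 1 by rewrite ltr_wpDl.
exists (e / (L + 1)) => [|h hL2 h_small]; first by rewrite divr_gt0.
have [_ ihh] := hL2.
have ifh := integrable_iota (L2D fL2 hL2).
have if_ := integrable_iota fL2.
have iGh := integrable_dotRl GL2 hL2.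
rewrite /Ifun /ipL2 -RintegralB // -RintegralB //; last first.
  exact: (integrableB measurableT ifh if_).
set F := fun x => _.
have iF : mu.-integrable [set: X] (EFin \o F).
  exact: (integrableB measurableT (integrableB measurableT ifh if_) iGh).
apply: le_trans (le_normr_Rintegral measurableT iF) _.
apply: (@le_trans _ _ (Rintegral mu [set: X] (fun x => L * dotRl (h x) (h x)))).
  apply: ae_le_Rintegral; first exact: (integrable_abse iF).
    exact: (integrableZl measurableT L ihh).
  by apply: filterS iota_descent => x descent; exact: descent.
rewrite RintegralZl // -/(ipL2 mu h h) -normL2_sqr.
move: h_small; rewrite ltr_pdivlMr // => h_small.
by have := normL2_ge0 mu h; nra.
Qed.

Let grad_iota f x := projT1 (cid (iota_integrand.2.1 x (f x))).

Let grad_iotaP f x : has_grad_Rl (iota x) (f x) (grad_iota f x).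
Proof. by rewrite /grad_iota; case: cid. Qed.

Lemma has_grad_L2_Ifun_ae f G : L2 mu f -> L2 mu G ->
  has_grad_L2 mu (Ifun mu iota) f G ->
  {ae mu, forall x, has_grad_Rl (iota x) (f x) (G x)}.
Proof.
move=> fL2 GL2 dG.
have grad_iota_L2 := L2_integrand_grad fL2 (grad_iotaP f).
have := has_grad_L2_unique GL2 grad_iota_L2 dG (has_grad_L2_Ifun fL2 (grad_iotaP f)).
by apply: filterS => x ->.
Qed.

Lemma exists_has_grad_L2_Ifun f : L2 mu f ->
  exists G, L2 mu G /\ has_grad_L2 mu (Ifun mu iota) f G.
Proof.
move=> fL2; exists (grad_iota f).
by split; [exact: L2_integrand_grad (grad_iotaP f) | exact: has_grad_L2_Ifun].
Qed.

Lemma LG_L2_Ifun : LG_L2 mu L (Ifun mu iota).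
Proof.
split => [|f g Gf Gg fL2 gL2 GfL2 GgL2 dGf dGg]; first exact: exists_has_grad_L2_Ifun.
rewrite -[L]ger0_norm // -normL2Z; last exact: L2B.
rewrite /normL2 ler_sqrt ?ipL2_ge0 //.
have GfgL2 := L2B GfL2 GgL2; have LfgL2 := L2Z L (L2B fL2 gL2).
apply: ae_le_Rintegral; [exact: integrable_dotRl | exact: integrable_dotRl |].
apply: filterS3 (has_grad_L2_Ifun_ae fL2 GfL2 dGf) (has_grad_L2_Ifun_ae gL2 GgL2 dGg)
  iota_LG => x dGfx dGgx [_ lip].
rewrite -!normRl_sqr normRlZ ger0_norm // ler_sqr ?nnegrE ?mulr_ge0 ?normRl_ge0 //.
exact: lip.
Qed.

Lemma PL_L2_Ifun_le (lam : R) f G g : 0 < lam ->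
  {ae mu, forall x, PL_Rl lam (iota x)} ->
  L2 mu f -> L2 mu G -> has_grad_L2 mu (Ifun mu iota) f G -> L2 mu g ->
  lam * (Ifun mu iota f - Ifun mu iota g) <= 2^-1 * normL2 mu G ^+ 2.
Proof.
move=> lam_gt0 iota_PL fL2 GL2 dG gL2.
have [_ iGG] := GL2.
have if_ := integrable_iota fL2; have ig := integrable_iota gL2.
have ifg := integrableB measurableT if_ ig.
rewrite normL2_sqr /Ifun /ipL2 -RintegralB // -!RintegralZl //.
apply: ae_le_Rintegral.
- exact: (integrableZl measurableT lam ifg).
- exact: (integrableZl measurableT _ iGG).
apply: filterS2 (has_grad_L2_Ifun_ae fL2 GL2 dG) iota_PL => x dGx [lb [_ PLx]].
have inf_le : inf (range (iota x)) <= iota x (g x) by apply: (ge_inf lb); exists (g x).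
rewrite -normRl_sqr; apply: le_trans (PLx _ _ dGx).
by rewrite ler_pM2l // lerD2l lerN2.
Qed.

Lemma PL_L2_Ifun (lam : R) : 0 < lam -> {ae mu, forall x, PL_Rl lam (iota x)} ->
  PL_L2 mu lam (Ifun mu iota).
Proof.
move=> lam_gt0 iota_PL.
pose gap f G := Ifun mu iota f - 2^-1 * normL2 mu G ^+ 2 / lam.
have gap_lbound f G : L2 mu f -> L2 mu G -> has_grad_L2 mu (Ifun mu iota) f G ->
    lbound (Ifun mu iota @` @L2 _ _ _ mu l) (gap f G).
  move=> fL2 GL2 dG _ [g gL2 <-].
  have := PL_L2_Ifun_le lam_gt0 iota_PL fL2 GL2 dG gL2.
  by rewrite /gap -ler_pdivlMl // mulrC; lra.
have L2_0 : L2 mu (fun=> 0 : 'rV[R]_l) := L2_cst mu 0.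
have [G0 [G0L2 dG0]] := exists_has_grad_L2_Ifun L2_0.
have lb : has_lbound (Ifun mu iota @` @L2 _ _ _ mu l).
  by exists (gap (fun=> 0) G0); exact: gap_lbound G0L2 dG0.
split => //; split => [|f G fL2 GL2 dG]; first exact: exists_has_grad_L2_Ifun.
have : gap f G <= inf (Ifun mu iota @` @L2 _ _ _ mu l).
  by apply: lb_le_inf; [exists (Ifun mu iota f), f | exact: gap_lbound].
by rewrite /gap -ler_pdivlMl // mulrC; lra.
Qed.

End IntegralFunctional.

Theorem lemma4 (R : realType) (d : measure_display) (X : measurableType d)
  (mu : probability X R) (l : nat) (Liota : R) (iota : X -> 'rV[R]_l -> R) :
  0 <= Liota ->
  integrand mu iota ->
  {ae mu, forall x, LG_Rl Liota (iota x)} ->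
  [/\ (forall f G : X -> 'rV[R]_l, L2 mu f ->
         (forall x, has_grad_Rl (iota x) (f x) (G x)) ->
         L2 mu G /\ has_grad_L2 mu (Ifun mu iota) f G),
      LG_L2 mu Liota (Ifun mu iota)
    & forall lam : R, 0 < lam ->
        {ae mu, forall x, PL_Rl lam (iota x)} ->
        PL_L2 mu lam (Ifun mu iota)].
Proof.
move=> L_ge0 iota_integrand iota_LG; split.
- move=> f G fL2 fG; split.
    exact: (L2_integrand_grad (mu := mu) L_ge0 iota_integrand iota_LG fL2 fG).
  exact: (has_grad_L2_Ifun (mu := mu) L_ge0 iota_integrand iota_LG fL2 fG).
- exact: (LG_L2_Ifun (mu := mu) L_ge0 iota_integrand iota_LG).
- move=> lam lam_gt0 iota_PL.
  exact: (PL_L2_Ifun (mu := mu) L_ge0 iota_integrand iota_LG lam_gt0 iota_PL).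
Qed.
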